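(* Let $\Bbbk$ be an algebraically closed field and $A$ a local finite dimensional $\Bbbk$-algebra. Then $\operatorname{HHdim} T(A)=\infty$.
   Context: $T(A)=A\ltimes DA$ is the trivial extension: the vector space $A\oplus DA$, where $DA=\operatorname{Hom}_\Bbbk(A,\Bbbk)$ with its natural bimodule structure, with multiplication $(a,f)(b,g)=(ab,ag+fb)$. For a finite dimensional algebra $B$, $\operatorname{HH}_n(B)=\operatorname{Tor}^{B\otimes_\Bbbk B^{\mathrm{op}}}_n(B,B)$ is the $n$-th Hochschild homology group, and $\operatorname{HHdim}B=\sup\{n\mid \operatorname{HH}_n(B)\neq 0\}$. *)

From HB Require Import structures.
From mathcomp Require Import all_boot all_order all_algebra all_field.
Set Implicit Arguments. Unset Strict Implicit. Unset Printing Implicit Defensive.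
Import GRing.Theory.
Local Open Scope ring_scope.

(** A (unital, associative) ring is local when the sum of two non-units is a
    non-unit (equivalently: the non-units form the unique maximal ideal). *)
Definition local_ring (R : unitRingType) : Prop :=
  forall x y : R, x \notin GRing.unit -> y \notin GRing.unit ->
    (x + y) \notin GRing.unit.

Section Hochschild.
Variables (k : fieldType) (V : vectType k) (mul : V -> V -> V).

Definition hdim := \dim (fullv : {vspace V}).
Definition hbasis := vbasis (fullv : {vspace V}).

(** Basis tensors of V^{(x) (n+1)} are indexed by functions 'I_(n+1) -> 'I_d;
    the Hochschild chain group C_n(V) = V^{(x) (n+1)} is written in coordinates. *)
Definition htens (n : nat) := {ffun 'I_n.+1 -> 'I_hdim}.
Definition hchain (n : nat) := {ffun htens n -> k^o}.

Definition hprod (a b j : 'I_hdim) : k :=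
  coord hbasis j (mul hbasis`_a hbasis`_b).

(** i-th face (0 <= i <= n) of a basis tensor f of degree n+1:
    a_0 (x) .. (x) a_i a_(i+1) (x) .. (x) a_(n+1), coefficient at g *)
Definition hface (n : nat) (i : 'I_n.+1) (f : htens n.+1) (g : htens n) : k :=
  if [forall j : 'I_n.+1, ((j < i)%N ==> (g j == f (inord j)))
                        && ((i < j)%N ==> (g j == f (inord j.+1)))]
  then hprod (f (inord i)) (f (inord i.+1)) (g i) else 0.

(** last face: a_(n+1) a_0 (x) a_1 (x) .. (x) a_n, coefficient at g *)
Definition hcyc (n : nat) (f : htens n.+1) (g : htens n) : k :=
  if [forall j : 'I_n.+1, (0 < j)%N ==> (g j == f (inord j))]
  then hprod (f ord_max) (f ord0) (g ord0) else 0.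

Definition hbound_basis (n : nat) (f : htens n.+1) : hchain n :=
  [ffun g => \sum_(i < n.+1) (-1) ^+ i * hface i f g
             + (-1) ^+ n.+1 * hcyc f g].

Definition hbound (n : nat) : 'Hom(hchain n.+1, hchain n) :=
  linfun (fun c : hchain n.+1 => \sum_f c f *: hbound_basis f).

Definition HH_nonzero (n : nat) : bool :=
  match n with
  | 0 => limg (hbound 0) != fullv
  | m.+1 => ~~ (lker (hbound m) <= limg (hbound m.+1))%VS
  end.

Definition HHdim_infinite : Prop :=
  forall N : nat, exists2 n : nat, (N <= n)%N & HH_nonzero n.

End Hochschild.

Section TrivialExtension.
Variables (k : fieldType) (A : falgType k).

Definition dual_space := 'Hom(A, k^o).

Definition triv_ext := (A * dual_space)%type.

(** bimodule actions: (a.g)(x) = g(x a), (f.b)(x) = f(b x) *)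
Definition triv_ext_mul (u v : triv_ext) : triv_ext :=
  let: (a, f) := u in let: (b, g) := v in
  (a * b, linfun (fun x : A => (g (x * a) : k^o) + f (b * x))).

End TrivialExtension.

From HB Require Import structures.
From mathcomp Require Import all_boot all_order all_algebra all_field.
From Stdlib Require Import FunctionalExtensionality.
From mathcomp Require Import zify ring.
Set Implicit Arguments. Unset Strict Implicit. Unset Printing Implicit Defensive.
Import GRing.Theory.
Local Open Scope ring_scope.

(* Since A is local and k algebraically closed, A has a character [lchar] with kernel the
   radical, and a nonzero socle vector [s] with [a s = s a = lchar a s].  On T(A) the
   functional [lam (a, f) = f s] is then a derivation for [chi (a, f) = lchar a], and
   [w = (0, f)] with [f s = 1] satisfies [w w = 0] and [lam w = 1].  In even degrees
   [lam (x) .. (x) lam] is a Hochschild cocycle, [w (x) .. (x) w] is a cycle, and they pair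
   to [1], so every even Hochschild homology group of degree >= 2 is nonzero. *)

Section OneSidedInverses.
Variables (k : fieldType) (A : falgType k).

Lemma unitr_of_linv (x y : A) : y * x = 1 -> x \is a GRing.unit.
Proof.
move=> yx1.
have inj_x : lker (amull x) == 0%VS.
  apply/lker0P => v w; rewrite !lfunE /= => e.
  by rewrite -[v]mul1r -[w]mul1r -yx1 -!mulrA e.
set r := ((amull x)^-1)%VF 1.
have xr : x * r = 1 by have := lker0_lfunVK inj_x 1; rewrite lfunE.
have ry : r = y by rewrite -[y]mulr1 -xr mulrA yx1 mul1r.
by apply/unitrP; exists y; rewrite -ry xr ry.
Qed.

Lemma unitr_of_rinv (x y : A) : x * y = 1 -> x \is a GRing.unit.
Proof.
move=> xy1.
have inj_x : lker (amulr x) == 0%VS.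
  apply/lker0P => v w; rewrite !lfunE /= => e.
  by rewrite -[v]mulr1 -[w]mulr1 -xy1 !mulrA e.
apply: (@unitr_of_linv _ (((amulr x)^-1)%VF 1)).
by have := lker0_lfunVK inj_x 1; rewrite lfunE.
Qed.

Lemma nonunit_mull (a x : A) : x \notin GRing.unit -> a * x \notin GRing.unit.
Proof.
apply: contra => ax_unit; apply: (@unitr_of_linv _ ((a * x)^-1 * a)).
by rewrite -mulrA mulVr.
Qed.

Lemma nonunit_mulr (a x : A) : x \notin GRing.unit -> x * a \notin GRing.unit.
Proof.
apply: contra => xa_unit; apply: (@unitr_of_rinv _ (a * (x * a)^-1)).
by rewrite mulrA divrr.
Qed.

End OneSidedInverses.

Lemma exists_nonunit_shift (k : closedFieldType) (A : falgType k) (a : A) :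
  exists c : k, a - c%:A \notin GRing.unit.
Proof.
set f : 'End(A) := amulr a.
have dim_gt0 : (0 < \dim {:A})%N.
  rewrite lt0n dimv_eq0; apply: contraTneq (memvf (1 : A)) => ->.
  by rewrite memv0 oner_eq0.
set M := passmx.mxof (vbasis {:A}) (vbasis {:A}) f.
have : size (char_poly M) != 1%N by rewrite size_char_poly; case: (\dim {:A}) dim_gt0.
case/closed_rootP => c rootc; exists c.
have eigc : eigenvalue M c by rewrite eigenvalue_root_char.
have : passmx.leigenspace f c != 0%VS.
  by rewrite (@passmx.leigenspaceE _ _ _ (vbasisP {:A})) ?passmx.vsof_eq0 //; exact: vbasisP.
rewrite -vpick0 => v_neq0.
have := memv_pick (passmx.leigenspace f c).
rewrite memv_ker !lfunE /= !lfunE /= => /eqP fv.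
apply: contra v_neq0 => shift_unit; apply/eqP.
apply: (mulIr shift_unit); rewrite mul0r mulrBr mulr_algr.
by rewrite -fv lfunE /= id_lfunE.
Qed.

Section LocalCharacter.
Variables (k : closedFieldType) (A : falgType k).
Hypothesis A_local : local_ring A.

(* Some [c] making [a - c] a non-unit; when [A] is local, [c] is unique and [lchar] is
   the residue map [A -> A / rad A = k]. *)
Definition lchar (a : A) : k := xchoose (exists_nonunit_shift a).

Lemma lchar_nonunit (a : A) : a - (lchar a)%:A \notin GRing.unit.
Proof. exact: (xchooseP (exists_nonunit_shift a)). Qed.

Lemma lchar_uniq (a : A) (c : k) : a - c%:A \notin GRing.unit -> lchar a = c.
Proof.
move=> ac_nonunit; apply/eqP; rewrite -subr_eq0; apply/negPn/negP => diff_neq0.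
have := A_local ac_nonunit (nonunit_mull (-1) (lchar_nonunit a)).
rewrite mulN1r opprB addrC addrA subrK -scalerBl => /negP; apply.
by rewrite scaler_unit ?unitr1 // unitfE.
Qed.

Lemma lchar_alg (c : k) : lchar c%:A = c.
Proof. by apply: lchar_uniq; rewrite subrr unitr0. Qed.

Lemma lchar1 : lchar 1 = 1.
Proof. by rewrite -(scale1r (1 : A)) lchar_alg. Qed.

Lemma lcharD (a b : A) : lchar (a + b) = lchar a + lchar b.
Proof.
apply: lchar_uniq; rewrite scalerDl opprD addrACA.
exact: A_local (lchar_nonunit a) (lchar_nonunit b).
Qed.

Lemma lcharM (a b : A) : lchar (a * b) = lchar a * lchar b.
Proof.
apply: lchar_uniq.
have -> : a * b - (lchar a * lchar b)%:A =
    (a - (lchar a)%:A) * b + (lchar a)%:A * (b - (lchar b)%:A).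
  by rewrite mulrBl mulrBr !mulr_algl scalerA addrA subrK.
exact: A_local (nonunit_mulr _ (lchar_nonunit a)) (nonunit_mull _ (lchar_nonunit b)).
Qed.

Lemma lcharZ (c : k) (a : A) : lchar (c *: a) = c * lchar a.
Proof. by rewrite -mulr_algl lcharM lchar_alg. Qed.

Lemma lchar_eq0_nonunit (a : A) : a \notin GRing.unit -> lchar a = 0.
Proof. by move=> a_nonunit; apply: lchar_uniq; rewrite scale0r subr0. Qed.

Definition radp (a : A) : A := a - (lchar a)%:A.

Lemma radp_is_linear : linear radp.
Proof.
move=> c a b; rewrite /radp lcharD lcharZ scalerDl scalerBr -scalerA.
by rewrite opprD addrACA.
Qed.
HB.instance Definition _ := GRing.isLinear.Build k A A *:%R radp radp_is_linear.

Lemma lchar_radp (a : A) : lchar (radp a) = 0.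
Proof. by rewrite /radp lcharD -scaleN1r lcharZ lchar_alg mulN1r subrr. Qed.

Lemma radp_id (a : A) : lchar a = 0 -> radp a = a.
Proof. by rewrite /radp => ->; rewrite scale0r subr0. Qed.

Lemma radp_mulr (a x : A) : radp (a * radp x) = a * radp x.
Proof. by apply: radp_id; rewrite lcharM lchar_radp mulr0. Qed.

Lemma radp_mull (a x : A) : radp (radp x * a) = radp x * a.
Proof. by apply: radp_id; rewrite lcharM lchar_radp mul0r. Qed.

Lemma unit_1_sub_radp (x : A) : 1 - radp x \is a GRing.unit.
Proof.
apply: contraT => /lchar_eq0_nonunit.
by rewrite lcharD -scaleN1r lcharZ lchar_radp lchar1 mulr0 addr0 => /eqP; rewrite oner_eq0.
Qed.

End LocalCharacter.

Section Socle.
Variables (k : closedFieldType) (A : falgType k).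
Hypothesis A_local : local_ring A.

(* Either [rad A] kills [y], or [rad A * y] is a nonzero left ideal strictly inside [U]:
   were it all of [U], then [y = r y] with [1 - r] a unit, so [y = 0]. *)
Lemma left_ideal_rad_annihilated n (U : {vspace A}) :
    (\dim U <= n)%N -> U != 0%VS -> (forall a u, u \in U -> a * u \in U) ->
  exists y, [/\ y \in U, y != 0 & forall x, radp x * y = 0].
Proof.
elim: n U => [|n IH] U dimU U_neq0 U_ideal; first by rewrite -dimv_eq0 -leqn0 dimU in U_neq0.
set y := vpick U; have yU : y \in U := memv_pick U.
have y_neq0 : y != 0 by rewrite vpick0.
set L := (amulr y \o linfun (@radp k A))%VF.
have LE x : L x = radp x * y by rewrite comp_lfunE !lfunE.
have LU : (limg L <= U)%VS.
  by apply/subvP => _ /memv_imgP [x _ ->]; rewrite LE; exact: U_ideal.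
have [L0|L_neq0] := eqVneq (limg L) 0%VS.
  exists y; split=> // x; apply/eqP; rewrite -memv0 -L0 -LE; exact: memv_img (memvf x).
have [z [zL z_neq0 z_ann]] : exists z, [/\ z \in limg L, z != 0 & forall x, radp x * z = 0].
  apply: (IH (limg L)) => //; last first.
    move=> a _ /memv_imgP [x _ ->]; rewrite LE mulrA -(radp_mulr A_local) -LE.
    exact: memv_img (memvf _).
  rewrite -ltnS; apply: leq_trans dimU; rewrite (ltn_leqif (dimv_leqif_eq LU)).
  apply: contra y_neq0 => /eqP LUE; move: yU; rewrite -LUE => /memv_imgP [x _].
  rewrite LE => yE; apply/eqP; apply: (mulrI (unit_1_sub_radp A_local x)).
  by rewrite mulr0 mulrBl mul1r -yE subrr.
by exists z; split=> //; exact: (subvP LU).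
Qed.

Lemma right_ideal_rad_annihilated n (U : {vspace A}) :
    (\dim U <= n)%N -> U != 0%VS -> (forall a u, u \in U -> u * a \in U) ->
  exists y, [/\ y \in U, y != 0 & forall x, y * radp x = 0].
Proof.
elim: n U => [|n IH] U dimU U_neq0 U_ideal; first by rewrite -dimv_eq0 -leqn0 dimU in U_neq0.
set y := vpick U; have yU : y \in U := memv_pick U.
have y_neq0 : y != 0 by rewrite vpick0.
set L := (amull y \o linfun (@radp k A))%VF.
have LE x : L x = y * radp x by rewrite comp_lfunE !lfunE.
have LU : (limg L <= U)%VS.
  by apply/subvP => _ /memv_imgP [x _ ->]; rewrite LE; exact: U_ideal.
have [L0|L_neq0] := eqVneq (limg L) 0%VS.
  exists y; split=> // x; apply/eqP; rewrite -memv0 -L0 -LE; exact: memv_img (memvf x).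
have [z [zL z_neq0 z_ann]] : exists z, [/\ z \in limg L, z != 0 & forall x, z * radp x = 0].
  apply: (IH (limg L)) => //; last first.
    move=> a _ /memv_imgP [x _ ->]; rewrite LE -mulrA -(radp_mull A_local) -LE.
    exact: memv_img (memvf _).
  rewrite -ltnS; apply: leq_trans dimU; rewrite (ltn_leqif (dimv_leqif_eq LU)).
  apply: contra y_neq0 => /eqP LUE; move: yU; rewrite -LUE => /memv_imgP [x _].
  rewrite LE => yE; apply/eqP; apply: (mulIr (unit_1_sub_radp A_local x)).
  by rewrite mul0r mulrBr mulr1 -yE subrr.
by exists z; split=> //; exact: (subvP LU).
Qed.

Lemma exists_socle_vector : exists2 s : A, s != 0 &
  forall a, a * s = lchar a *: s /\ s * a = lchar a *: s.
Proof.
have A_neq0 : (fullv : {vspace A}) != 0%VS.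
  by apply: contraTneq (memvf (1 : A)) => ->; rewrite memv0 oner_eq0.
have [y [_ y_neq0 y_ann]] := left_ideal_rad_annihilated (leqnn _) A_neq0
  (fun a u _ => memvf (a * u)).
have yA_neq0 : limg (amull y) != 0%VS.
  apply: contraNneq y_neq0 => yA0; rewrite -memv0 -yA0.
  by apply/memv_imgP; exists 1; rewrite ?memvf // lfunE /= mulr1.
have yA_ideal a u : u \in limg (amull y) -> u * a \in limg (amull y).
  case/memv_imgP=> v _ ->; apply/memv_imgP; exists (v * a); rewrite ?memvf //.
  by rewrite !lfunE /= mulrA.
have [s [/memv_imgP [v _ ->] s_neq0 s_ann]] :=
  right_ideal_rad_annihilated (leqnn _) yA_neq0 yA_ideal.
exists (amull y v) => // a; rewrite !lfunE /= in s_ann *.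
have aE : a = radp a + (lchar a)%:A by rewrite /radp subrK.
by rewrite {1 3}aE mulrDl mulrDr mulrA y_ann mul0r s_ann mulr_algl mulr_algr !add0r.
Qed.

End Socle.

Section TrivialExtension.
Variables (k : fieldType) (A : falgType k).
Local Notation T := (triv_ext A).
Local Notation tmul := (@triv_ext_mul k A).

Lemma triv_ext_mul_fst (u v : T) : (tmul u v).1 = u.1 * v.1.
Proof. by case: u; case: v. Qed.

Lemma triv_ext_mul_snd (u v : T) x : (tmul u v).2 x = v.2 (x * u.1) + u.2 (v.1 * x).
Proof.
case: u => a f; case: v => b g /=.
(* [linfun] is applied to a bare function; identify it with a linear map to evaluate. *)
pose h : 'Hom(A, k^o) := ((g \o amulr a) + (f \o amull b))%VF.
have -> : (fun x : A => (g (x * a) : k^o) + f (b * x)) = fun_of_lfun h.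
  by apply: functional_extensionality => y; rewrite add_lfunE !comp_lfunE !lfunE.
by rewrite fun_of_lfunK add_lfunE !comp_lfunE !lfunE.
Qed.

Lemma triv_ext_eq (u v : T) : u.1 = v.1 -> u.2 = v.2 -> u = v.
Proof. by case: u; case: v => /= ? ? ? ? -> ->. Qed.

Lemma triv_ext_scale_add (c : k) (u u' : T) :
  c *: u + u' = (c *: u.1 + u'.1, c *: u.2 + u'.2).
Proof. by []. Qed.

Lemma triv_ext_mulZDl (c : k) (u u' v : T) :
  tmul (c *: u + u') v = c *: tmul u v + tmul u' v.
Proof.
rewrite !triv_ext_scale_add; apply: triv_ext_eq; cbn [fst snd].
  by rewrite !triv_ext_mul_fst; cbn [fst snd]; rewrite mulrDl scalerAl.
apply/lfunP => x; rewrite add_lfunE scale_lfunE !triv_ext_mul_snd; cbn [fst snd].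
rewrite add_lfunE scale_lfunE mulrDr linearD /= -scalerAr linearZ /=.
by rewrite scalerDr addrACA.
Qed.

Lemma triv_ext_mulZDr (c : k) (u v v' : T) :
  tmul u (c *: v + v') = c *: tmul u v + tmul u v'.
Proof.
rewrite !triv_ext_scale_add; apply: triv_ext_eq; cbn [fst snd].
  by rewrite !triv_ext_mul_fst; cbn [fst snd]; rewrite mulrDr scalerAr.
apply/lfunP => x; rewrite add_lfunE scale_lfunE !triv_ext_mul_snd; cbn [fst snd].
rewrite add_lfunE scale_lfunE mulrDl linearD /= -scalerAl linearZ /=.
by rewrite scalerDr addrACA.
Qed.

Lemma triv_ext_dual_sq (f : dual_space A) : tmul (0, f) (0, f) = 0.
Proof.
apply: triv_ext_eq; first by rewrite triv_ext_mul_fst mul0r.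
by apply/lfunP => x; rewrite triv_ext_mul_snd /= mulr0 mul0r linear0 addr0 zero_lfunE.
Qed.

Definition socle_eval (s : A) (u : T) : k^o := u.2 s.

Lemma socle_eval_is_linear (s : A) : linear (socle_eval s).
Proof. by move=> c u v; rewrite /socle_eval add_lfunE scale_lfunE. Qed.
HB.instance Definition _ (s : A) :=
  GRing.isLinear.Build k T k^o *:%R (socle_eval s) (socle_eval_is_linear s).

Lemma socle_eval_mul (chi : A -> k) (s : A) :
    (forall a, a * s = chi a *: s /\ s * a = chi a *: s) ->
  forall u v, socle_eval s (tmul u v) = chi u.1 * socle_eval s v + socle_eval s u * chi v.1.
Proof.
move=> s_socle u v; rewrite /socle_eval triv_ext_mul_snd.
by rewrite (s_socle u.1).2 (s_socle v.1).1 !linearZ /= [u.2 s * _]mulrC.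
Qed.

End TrivialExtension.

Lemma exists_dual_eq1 (k : fieldType) (V : vectType k) (s : V) :
  s != 0 -> exists f : 'Hom(V, k^o), f s = 1.
Proof.
move=> s_neq0.
have [i coord_neq0] : exists i, coord (vbasis fullv) i s != 0.
  apply/existsP; apply: contraR s_neq0 => /existsPn coord0.
  rewrite (coord_vbasis (memvf s)) big1 // => i _.
  by move/negPn/eqP: (coord0 i) => ->; rewrite scale0r.
exists ((coord (vbasis fullv) i s)^-1 *: linfun (coord (vbasis fullv) i : V -> k^o)).
by rewrite scale_lfunE lfunE /= [_ *: _]mulVf.
Qed.

Lemma sum_on_section (R : pzSemiRingType) (T P : finType) (pi : T -> P) (phi : P -> T)
    (F H : T -> R) (G : P -> R) :
    cancel phi pi -> (forall t, F t = if t == phi (pi t) then G (pi t) else 0) ->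
  \sum_t F t * H t = \sum_p G p * H (phi p).
Proof.
move=> phiK FE.
transitivity (\sum_t if t == phi (pi t) then G (pi t) * H t else 0).
  by apply: eq_bigr => t _; rewrite FE; case: ifP; rewrite ?mul0r.
rewrite -big_mkcond (reindex_onto phi pi) => [|t /eqP/esym //].
by apply: eq_big => [p|p _]; rewrite phiK ?eqxx.
Qed.

Lemma prodD2 (R : comPzSemiRingType) (I : finType) (F : I -> R) (p q : I) : p != q ->
  \prod_j F j = F p * F q * \prod_(j | (j != p) && (j != q)) F j.
Proof.
move=> pq; rewrite (bigD1 p) //= (bigD1 q) 1?eq_sym //= mulrA.
by congr (_ * _); apply: eq_bigl => j; rewrite andbC.
Qed.

Lemma prod_ord_inord (R : pzSemiRingType) m (G : 'I_m.+1 -> R) :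
  \prod_(j < m.+1) G j = \prod_(0 <= q < m.+1) G (inord q).
Proof. by rewrite big_mkord; apply: eq_bigr => j _; rewrite inord_val. Qed.

Section HochschildFaces.
Variables (k : fieldType) (V : vectType k) (mul : V -> V -> V).
Local Notation d := (hdim V).

(* The [i]-th face of [f] is supported on the tensors [contract i f c]; dually, the
   tensors whose [i]-th face meets [g] are the [expand i g ab]. *)
Definition contract n (i : 'I_n.+1) (f : htens V n.+1) (c : 'I_d) : htens V n :=
  [ffun j : 'I_n.+1 => if (j < i)%N then f (inord j) else if j == i then c else f (inord j.+1)].

Lemma contract_at n i f c : @contract n i f c i = c.
Proof. by rewrite ffunE ltnn eqxx. Qed.

Lemma hface_contract n (i : 'I_n.+1) f g : hface mul i f g =
  if g == contract i f (g i) then hprod mul (f (inord i)) (f (inord i.+1)) (g i) else 0.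
Proof.
rewrite /hface; congr (if _ then _ else _).
apply/forallP/eqP => [h|e j].
  apply/ffunP => j; rewrite ffunE; have /andP [h1 h2] := h j.
  case: (ltngtP j i) => [lt|gt|eq].
  - by apply/eqP; exact: (implyP h1).
  - have ji : (j == i) = false by apply/eqP => e; move: gt; rewrite e ltnn.
    by rewrite ji; apply/eqP; exact: (implyP h2).
  - by rewrite (_ : j = i) ?eqxx //; apply: val_inj.
have := congr1 (fun h : htens V n => h j) e; rewrite /= ffunE => ->.
apply/andP; split; apply/implyP => lt; first by rewrite lt.
have ji : (j == i) = false by apply/eqP => e2; move: lt; rewrite e2 ltnn.
by rewrite ltnNge (ltnW lt) /= ji.
Qed.

Lemma sum_hface_contract n (i : 'I_n.+1) f (H : htens V n -> k) :
  \sum_g hface mul i f g * H g =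
  \sum_c hprod mul (f (inord i)) (f (inord i.+1)) c * H (contract i f c).
Proof.
apply: (sum_on_section (pi := fun g : htens V n => g i)); first exact: contract_at.
exact: hface_contract.
Qed.

Definition contract_cyc n (f : htens V n.+1) (c : 'I_d) : htens V n :=
  [ffun j : 'I_n.+1 => if j == ord0 then c else f (inord j)].

Lemma hcyc_contract n f g : @hcyc k V mul n f g =
  if g == contract_cyc f (g ord0) then hprod mul (f ord_max) (f ord0) (g ord0) else 0.
Proof.
rewrite /hcyc; congr (if _ then _ else _).
apply/forallP/eqP => [h|e j].
  apply/ffunP => j; rewrite ffunE; have h1 := h j.
  case: eqP => [->//|ne]; apply/eqP; apply: (implyP h1).
  by rewrite lt0n; apply/negP => /eqP e; apply: ne; apply: val_inj.
have := congr1 (fun h : htens V n => h j) e; rewrite /= ffunE => ->.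
apply/implyP => lt; case: (j =P ord0) => [e2|_]; [by rewrite e2 in lt | by []].
Qed.

Lemma sum_hcyc_contract n f (H : htens V n -> k) :
  \sum_g @hcyc k V mul n f g * H g =
  \sum_c hprod mul (f ord_max) (f ord0) c * H (contract_cyc f c).
Proof.
apply: (sum_on_section (pi := fun g : htens V n => g ord0)); last exact: hcyc_contract.
by move=> c; rewrite ffunE eqxx.
Qed.

Definition expand n (i : 'I_n.+1) (g : htens V n) (ab : 'I_d * 'I_d) : htens V n.+1 :=
  [ffun j : 'I_n.+2 => if (j < i)%N then g (inord j) else if (j == i :> nat) then ab.1
     else if (j == i.+1 :> nat) then ab.2 else g (inord j.-1)].

Lemma hface_expand n (i : 'I_n.+1) f g : hface mul i f g =
  if f == expand i g (f (inord i), f (inord i.+1))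
  then hprod mul (f (inord i)) (f (inord i.+1)) (g i) else 0.
Proof.
have iln := ltn_ord i.
rewrite /hface; congr (if _ then _ else _).
apply/forallP/eqP => [h|e j].
  apply/ffunP => j; rewrite ffunE; have jln := ltn_ord j.
  case: ifP => [lt|ge].
    have /andP [h1 _] := h (inord j); rewrite inordK in h1; last by lia.
    by rewrite inord_val in h1; move/implyP: h1 => /(_ lt) /eqP ->.
  case: ifP => [/eqP ei|ne].
    by congr (f _); apply: val_inj; rewrite /= inordK //; lia.
  case: ifP => [/eqP ei|ne1].
    by congr (f _); apply: val_inj; rewrite /= inordK //; lia.
  have /andP [_ h2] := h (inord j.-1); rewrite inordK in h2; last by lia.
  move/implyP: h2 => /(_ ltac:(lia)) /eqP ->; congr (f _); apply: val_inj.
  by rewrite /= inordK //; lia.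
have jln := ltn_ord j.
apply/andP; split; apply/implyP => lt.
  have := congr1 (fun h : htens V n.+1 => h (inord j)) e; rewrite /= ffunE inordK; last by lia.
  by rewrite lt inord_val => ->.
have := congr1 (fun h : htens V n.+1 => h (inord j.+1)) e; rewrite /= ffunE inordK; last by lia.
have -> : (j.+1 < i)%N = false by lia.
have -> : (j.+1 == i) = false by lia.
have -> : (j.+1 == i.+1) = false by lia.
by rewrite /= inord_val => ->.
Qed.

Lemma sum_hface_expand n (i : 'I_n.+1) g (H : htens V n.+1 -> k) :
  \sum_f hface mul i f g * H f =
  \sum_(ab : 'I_d * 'I_d) hprod mul ab.1 ab.2 (g i) * H (expand i g ab).
Proof.
have iln := ltn_ord i.
apply: (sum_on_section (pi := fun f : htens V n.+1 => (f (inord i), f (inord i.+1)))).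
  move=> [a b]; rewrite !ffunE !inordK; try lia.
  by rewrite ltnn eqxx /= ltnNge leqnSn /= (_ : (i.+1 == i) = false) ?eqxx //; lia.
by move=> f; rewrite hface_expand.
Qed.

Definition expand_cyc n (g : htens V n) (ab : 'I_d * 'I_d) : htens V n.+1 :=
  [ffun j : 'I_n.+2 => if j == ord0 then ab.2 else if j == ord_max then ab.1 else g (inord j)].

Lemma hcyc_expand n f g : @hcyc k V mul n f g =
  if f == expand_cyc g (f ord_max, f ord0) then hprod mul (f ord_max) (f ord0) (g ord0) else 0.
Proof.
rewrite /hcyc; congr (if _ then _ else _).
apply/forallP/eqP => [h|e j].
  apply/ffunP => j; rewrite ffunE; have jln := ltn_ord j.
  case: (j =P ord0) => [->//|ne0]; case: (j =P ord_max) => [->//|nem].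
  have jn : (j <= n)%N.
    suff : (j : nat) != n.+1 by lia.
    by apply/eqP => e; apply: nem; apply: val_inj.
  have j0 : (0 < j)%N.
    rewrite lt0n; apply/eqP => e; apply: ne0; by apply: val_inj.
  have := h (inord j); rewrite inordK // inord_val => /implyP /(_ j0) /eqP ->.
  done.
have jln := ltn_ord j.
apply/implyP => lt.
have := congr1 (fun h : htens V n.+1 => h (inord j)) e; rewrite /= ffunE.
have -> : (inord j == ord0 :> 'I_n.+2) = false.
  by apply/eqP => e2; have := congr1 val e2; rewrite /= inordK //; lia.
have -> : (inord j == ord_max :> 'I_n.+2) = false.
  by apply/eqP => e2; have := congr1 val e2; rewrite /= inordK //; lia.
rewrite inordK; last by lia.
by rewrite inord_val => ->.
Qed.

Lemma sum_hcyc_expand n g (H : htens V n.+1 -> k) :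
  \sum_f @hcyc k V mul n f g * H f =
  \sum_(ab : 'I_d * 'I_d) hprod mul ab.1 ab.2 (g ord0) * H (expand_cyc g ab).
Proof.
apply: (sum_on_section (pi := fun f : htens V n.+1 => (f ord_max, f ord0))).
  by move=> [a b]; rewrite !ffunE eqxx.
by move=> f; rewrite hcyc_expand.
Qed.
End HochschildFaces.

Section TensorPowerCycle.
Variables (k : fieldType) (V : vectType k) (mul : V -> V -> V).
Local Notation d := (hdim V).

Definition hbound_fun n (x : hchain V n.+1) : hchain V n := \sum_f x f *: hbound_basis mul f.
Lemma hbound_fun_is_linear n : linear (@hbound_fun n).
Proof.
move=> c x y; rewrite /hbound_fun scaler_sumr -big_split /=; apply: eq_bigr => f _.
by rewrite !ffunE scalerDl scalerA.
Qed.
HB.instance Definition _ n :=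
  GRing.isLinear.Build k (hchain V n.+1) (hchain V n) *:%R (@hbound_fun n)
    (@hbound_fun_is_linear n).

Lemma hboundE n x g : hbound mul n x g =
  \sum_f x f * (\sum_(i < n.+1) (-1) ^+ i * hface mul i f g + (-1) ^+ n.+1 * hcyc mul f g).
Proof.
have -> : hbound mul n = linfun (@hbound_fun n) by [].
rewrite lfunE /hbound_fun sum_ffunE; apply: eq_bigr => f _.
by rewrite ffunE ffunE.
Qed.


Variable W : 'I_d -> k.
Hypothesis W_sqzero : forall c, \sum_(ab : 'I_d * 'I_d) W ab.1 * W ab.2 * hprod mul ab.1 ab.2 c = 0.
Definition tens_pow n : hchain V n := [ffun t : htens V n => \prod_j W (t j)].

Lemma sum_hface_tens_pow n (i : 'I_n.+1) g :
  \sum_f tens_pow n.+1 f * hface mul i f g = 0.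
Proof.
have iln := ltn_ord i.
have i_neq : (inord i : 'I_n.+2) != inord i.+1.
  by apply/eqP => /(congr1 val); rewrite /= !inordK //; lia.
under eq_bigr => f _ do rewrite mulrC.
rewrite (sum_hface_expand mul i g (tens_pow n.+1)).
set R := \prod_(j | (j != inord i) && (j != inord i.+1)) W (expand i g (g i, g i) j).
transitivity (R * \sum_(ab : 'I_d * 'I_d) W ab.1 * W ab.2 * hprod mul ab.1 ab.2 (g i));
  last by rewrite W_sqzero mulr0.
rewrite mulr_sumr; apply: eq_bigr => ab _; rewrite ffunE (prodD2 _ i_neq) !ffunE !inordK; try lia.
rewrite ltnn eqxx /= ltnNge leqnSn /= (_ : (i.+1 == i) = false) ?eqxx; last by lia.
suff -> : \prod_(j | (j != inord i) && (j != inord i.+1)) W (expand i g ab j) = R by ring.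
apply: eq_bigr => j /andP [ji ji1]; rewrite !ffunE.
have -> : (j == i :> nat) = false.
  by apply: contraNF ji => /eqP j_eq; apply/eqP/val_inj; rewrite /= inordK //; lia.
have -> // : (j == i.+1 :> nat) = false.
by apply: contraNF ji1 => /eqP j_eq; apply/eqP/val_inj; rewrite /= inordK //; lia.
Qed.

Lemma sum_hcyc_tens_pow n g : \sum_f tens_pow n.+1 f * hcyc mul f g = 0.
Proof.
under eq_bigr => f _ do rewrite mulrC.
rewrite (sum_hcyc_expand mul g (tens_pow n.+1)).
set R := \prod_(j | (j != ord_max) && (j != ord0)) W (expand_cyc g (g ord0, g ord0) j).
transitivity (R * \sum_(ab : 'I_d * 'I_d) W ab.1 * W ab.2 * hprod mul ab.1 ab.2 (g ord0));
  last by rewrite W_sqzero mulr0.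
rewrite mulr_sumr; apply: eq_bigr => ab _.
rewrite ffunE (@prodD2 _ _ _ ord_max ord0) // !ffunE eqxx /=.
suff -> : \prod_(j | (j != ord_max) && (j != ord0)) W (expand_cyc g ab j) = R by ring.
by apply: eq_bigr => j /andP [ji ji1]; rewrite !ffunE (negbTE ji) (negbTE ji1).
Qed.

Lemma hbound_tens_pow n : hbound mul n (tens_pow n.+1) = 0.
Proof.
apply/ffunP => g; rewrite hboundE ffunE.
under eq_bigr => f _ do rewrite mulrDr mulr_sumr.
rewrite big_split /= exchange_big /= big1 ?add0r => [|i _].
  under eq_bigr => f _ do rewrite mulrCA.
  by rewrite -mulr_sumr sum_hcyc_tens_pow mulr0.
under eq_bigr => f _ do rewrite mulrCA.
by rewrite -mulr_sumr sum_hface_tens_pow mulr0.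
Qed.
End TensorPowerCycle.

Section DerivationCocycle.
Variables (k : fieldType) (V : vectType k) (mul : V -> V -> V).
Local Notation d := (hdim V).
Variables (lam chi : 'I_d -> k).
Hypothesis lam_der :
  forall a b, \sum_c hprod mul a b c * lam c = chi a * lam b + lam a * chi b.

Definition tens_eval n (x : hchain V n) : k := \sum_(t : htens V n) x t * \prod_j lam (t j).

Lemma tens_eval_tens_pow (W : 'I_d -> k) n :
  tens_eval (tens_pow W n) = (\sum_a W a * lam a) ^+ n.+1.
Proof.
rewrite /tens_eval; under eq_bigr => t _ do rewrite ffunE -big_split.
by rewrite -(bigA_distr_bigA (fun (i : 'I_n.+1) a => W a * lam a)) /= prodr_const card_ord.
Qed.

Section BasisTensor.
Variables (n : nat) (f : htens V n.+2).
Definition lam_at q := lam (f (inord q)).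
Definition lam_prod a b := \prod_(a <= q < b) lam_at q.

Lemma prod_contract (i : 'I_n.+2) c :
  \prod_j lam (contract i f c j) = lam_prod 0 i * lam c * lam_prod i.+2 n.+3.
Proof.
have iln := ltn_ord i.
rewrite prod_ord_inord (big_cat_nat _ (n := i)) //=; last by lia.
rewrite (big_ltn (m := i)) //= mulrA; congr (_ * _ * _).
- apply: eq_big_nat => q /andP [_ qi]; rewrite ffunE inordK; last by lia.
  by rewrite qi.
- rewrite ffunE inordK; last by lia.
  by rewrite ltnn (_ : inord i = i) ?eqxx // inord_val.
- rewrite /lam_prod (_ : i.+2 = i.+1 + 1)%N; last by lia.
  rewrite big_addn (_ : (n.+3 - 1 = n.+2)%N); last by lia.
  apply: eq_big_nat => q /andP [iq qn]; rewrite ffunE inordK; last by lia.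
  have -> : (q < i)%N = false by lia.
  have -> : (inord q == i) = false.
    by apply/negbTE/eqP => e; have := congr1 val e; rewrite /= inordK; lia.
  by rewrite /lam_at addn1.
Qed.

Lemma prod_contract_cyc c : \prod_j lam (contract_cyc f c j) = lam c * lam_prod 1 n.+2.
Proof.
rewrite prod_ord_inord (big_ltn (m := 0)) //=; congr (_ * _).
  by rewrite ffunE (_ : inord 0 = ord0) ?eqxx //; apply: val_inj; rewrite /= inordK.
apply: eq_big_nat => q /andP [q0 qn]; rewrite ffunE.
have -> : (inord q == ord0 :> 'I_n.+2) = false.
  by apply/negbTE/eqP => e; have := congr1 val e; rewrite /= inordK; lia.
by rewrite /lam_at inordK //; lia.
Qed.

(* The pairing of [f] with [lam (x) .. (x) chi (x) .. (x) lam], [chi] in slot [p]: by the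
   derivation rule the [i]-th face pairs to [chi_term i + chi_term i.+1], so the alternating
   sum defining the boundary telescopes. *)
Definition chi_term p := lam_prod 0 p * chi (f (inord p)) * lam_prod p.+1 n.+3.

Lemma tens_eval_hface (i : 'I_n.+2) :
  \sum_(t : htens V n.+1) hface mul i f t * \prod_j lam (t j) = chi_term i + chi_term i.+1.
Proof.
have iln := ltn_ord i.
rewrite sum_hface_contract; under eq_bigr => c _ do rewrite prod_contract.
transitivity (lam_prod 0 i * lam_prod i.+2 n.+3 *
  \sum_c hprod mul (f (inord i)) (f (inord i.+1)) c * lam c).
  rewrite mulr_sumr; apply: eq_bigr => c _; ring.
have h1 : lam_prod i.+1 n.+3 = lam_at i.+1 * lam_prod i.+2 n.+3.
  by rewrite /lam_prod big_ltn //; lia.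
have h2 : lam_prod 0 i.+1 = lam_prod 0 i * lam_at i by rewrite /lam_prod big_nat_recr.
rewrite lam_der /chi_term h1 h2 /lam_at; ring.
Qed.

Lemma tens_eval_hcyc :
  \sum_(t : htens V n.+1) hcyc mul f t * \prod_j lam (t j) = chi_term n.+2 + chi_term 0.
Proof.
rewrite sum_hcyc_contract; under eq_bigr => c _ do rewrite prod_contract_cyc.
transitivity (lam_prod 1 n.+2 * \sum_c hprod mul (f ord_max) (f ord0) c * lam c).
  rewrite mulr_sumr; apply: eq_bigr => c _; ring.
have e0 : f (inord 0) = f ord0 by congr (f _); apply: val_inj; rewrite /= inordK.
have em : f (inord n.+2) = f ord_max by congr (f _); apply: val_inj; rewrite /= inordK.
have h1 : lam_prod 0 0 = 1 by rewrite /lam_prod big_geq.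
have h2 : lam_prod n.+3 n.+3 = 1 by rewrite /lam_prod big_geq.
have h3 : lam_prod 0 n.+2 = lam_at 0 * lam_prod 1 n.+2 by rewrite /lam_prod big_ltn.
have h4 : lam_prod 1 n.+3 = lam_prod 1 n.+2 * lam_at n.+2 by rewrite /lam_prod big_nat_recr.
rewrite lam_der /chi_term h1 h2 h3 h4 /lam_at e0 em; ring.
Qed.

Lemma sum_alt_chi_term (K : nat) :
  \sum_(i < K) (-1) ^+ i * (chi_term i + chi_term i.+1) = chi_term 0 - (-1) ^+ K * chi_term K.
Proof.
elim: K => [|K IH]; first by rewrite big_ord0 expr0 mul1r subrr.
rewrite big_ord_recr /= IH exprS; ring.
Qed.

Lemma tens_eval_hbound_basis : odd n ->
  \sum_(t : htens V n.+1) hbound_basis mul f t * \prod_j lam (t j) = 0.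
Proof.
move=> on.
under eq_bigr => t _ do rewrite ffunE mulrDl mulr_suml.
rewrite big_split /= exchange_big /=.
under eq_bigr => i _ do
  (under eq_bigr => t _ do rewrite -mulrA; rewrite -mulr_sumr tens_eval_hface).
under [X in _ + X]eq_bigr => t _ do rewrite -mulrA.
rewrite -mulr_sumr tens_eval_hcyc.
rewrite (sum_alt_chi_term n.+2) -signr_odd /= on /= expr1; ring.
Qed.
End BasisTensor.

Lemma tens_eval_hbound n y : odd n -> tens_eval (hbound mul n.+1 y) = 0.
Proof.
move=> on; rewrite /tens_eval.
under eq_bigr => t _ do rewrite hboundE mulr_suml.
rewrite exchange_big /= big1 // => f _.
under eq_bigr => t _ do rewrite -mulrA.
rewrite -mulr_sumr.
have := tens_eval_hbound_basis f on.
under eq_bigr => t _ do rewrite ffunE.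
by move=> ->; rewrite mulr0.
Qed.
End DerivationCocycle.

Section SquareZeroDerivation.
Variables (k : fieldType) (V : vectType k) (mul : V -> V -> V).
Hypothesis mulZDl : forall c u u' v, mul (c *: u + u') v = c *: mul u v + mul u' v.
Hypothesis mulZDr : forall c u v v', mul u (c *: v + v') = c *: mul u v + mul u v'.
Local Notation e := (hbasis V).
Local Notation d := (hdim V).

Lemma mul_suml (I : finType) (F : I -> k) (u : I -> V) v :
  mul (\sum_i F i *: u i) v = \sum_i F i *: mul (u i) v.
Proof.
have mul0v : mul 0 v = 0.
  by have := mulZDl 1 0 0 v; rewrite !scale1r addr0 => /esym/(canRL (addrK _)); rewrite subrr.
apply: (big_ind2 (fun x y => mul x v = y)); first exact: mul0v.
  by move=> x1 y1 x2 y2 <- <-; rewrite -{1}[x1]scale1r mulZDl scale1r.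
by move=> i _; rewrite -[_ *: _]addr0 mulZDl mul0v addr0.
Qed.

Lemma mul_sumr (I : finType) (F : I -> k) (v : I -> V) u :
  mul u (\sum_i F i *: v i) = \sum_i F i *: mul u (v i).
Proof.
have mulu0 : mul u 0 = 0.
  by have := mulZDr 1 u 0 0; rewrite !scale1r addr0 => /esym/(canRL (addrK _)); rewrite subrr.
apply: (big_ind2 (fun x y => mul u x = y)); first exact: mulu0.
  by move=> x1 y1 x2 y2 <- <-; rewrite -{1}[x1]scale1r mulZDr scale1r.
by move=> i _; rewrite -[_ *: _]addr0 mulZDr mulu0 addr0.
Qed.

Lemma coord_mul (u v : V) (c : 'I_d) :
  coord e c (mul u v) =
    \sum_(ab : 'I_d * 'I_d) coord e ab.1 u * coord e ab.2 v * hprod mul ab.1 ab.2 c.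
Proof.
rewrite -(pair_big xpredT xpredT (fun a b => coord e a u * coord e b v * hprod mul a b c)) /=.
rewrite {1}(coord_vbasis (memvf u)) mul_suml linear_sum; apply: eq_bigr => a _.
rewrite linearZ /= {1}(coord_vbasis (memvf v)) mul_sumr linear_sum mulr_sumr.
by apply: eq_bigr => b _; rewrite linearZ /= mulrA.
Qed.

Lemma linear_coord_sum (lam : {linear V -> k^o}) (v : V) :
  lam v = \sum_a coord e a v * lam e`_a.
Proof.
by rewrite {1}(coord_vbasis (memvf v)) linear_sum; apply: eq_bigr => a _; rewrite linearZ.
Qed.

Variables (w : V) (lam : {linear V -> k^o}) (chi : V -> k).
Hypotheses (w_sq : mul w w = 0) (lam_w : lam w = 1).
Hypothesis lam_der : forall u v, lam (mul u v) = chi u * lam v + lam u * chi v.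

Lemma HH_nonzero_even (m : nat) : HH_nonzero mul m.*2.+2.
Proof.
pose W a := coord e a w.
have W_sqzero c : \sum_(ab : 'I_d * 'I_d) W ab.1 * W ab.2 * hprod mul ab.1 ab.2 c = 0.
  by rewrite -coord_mul w_sq linear0.
have lam_der_basis a b : \sum_c hprod mul a b c * lam e`_c =
    chi e`_a * lam e`_b + lam e`_a * chi e`_b.
  by rewrite -lam_der [RHS]linear_coord_sum.
apply/negP => /subvP/(_ (tens_pow W m.*2.+2)).
rewrite memv_ker hbound_tens_pow // => /(_ (eqxx 0)) /memv_imgP [y _ powE].
have := @tens_eval_tens_pow k V (fun a => lam e`_a : k) W m.*2.+2.
rewrite powE (tens_eval_hbound lam_der_basis); last by rewrite /= odd_double.
by rewrite /W -linear_coord_sum lam_w expr1n => /eqP; rewrite eq_sym oner_eq0.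
Qed.

Theorem HHdim_infinite_of_sqzero_derivation : HHdim_infinite mul.
Proof. by move=> N; exists N.*2.+2; rewrite ?HH_nonzero_even // -addnn; lia. Qed.

End SquareZeroDerivation.

Theorem theorem3p2 (k : closedFieldType) (A : falgType k) :
  local_ring A ->
  HHdim_infinite (@triv_ext_mul k A).
Proof.
move=> A_local.
have [s s_neq0 s_socle] := exists_socle_vector A_local.
have [f f_s] := exists_dual_eq1 s_neq0.
apply: (@HHdim_infinite_of_sqzero_derivation _ _ _ _ _ (0, f) (socle_eval s)
  (fun u => lchar u.1)).
- exact: triv_ext_mulZDl.
- exact: triv_ext_mulZDr.
- exact: triv_ext_dual_sq.
- exact: f_s.
- exact: socle_eval_mul.
Qed.
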